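(* Consider the constrained online prediction problem and the \texttt{BanditQ} policy described in the context, run for $T$ rounds with $V_t=V=\Theta(\sqrt{T})$ for $1\le t\le T$. Then $\mathrm{Regret}_T=O(T^{3/4})$, where the constant hidden in $O(\cdot)$ does not depend on $T$ or on the reward sequence (it may depend on $N$ and on the constant in $V=\Theta(\sqrt{T})$).
   Context: There are $N$ users. On each round $t=1,2,\dots$ an online policy chooses a probability vector $\bm{x}(t)=(x_1(t),\dots,x_N(t))$ in the standard simplex $\Delta_N=\{\bm{x}\in\mathbb{R}^N_{\ge 0}:\sum_i x_i=1\}$; afterwards an adversarially chosen reward vector $\bm{r}(t)=(r_1(t),\dots,r_N(t))\in[0,1]^N$ is revealed (full information), and the policy may use all past reward vectors to choose $\bm{x}(t+1)$. A subset $\mathcal{P}\subseteq[N]$ of protected users is given, with target rates $\lambda_i\in[0,1]$, $i\in\mathcal{P}$, satisfying $\sum_{i\in\mathcal{P}}\lambda_i\le 1$; set $\lambda_i=0$ for $i\notin\mathcal{P}$. The feasible set of stationary actions is $\Omega=\{\bm{x}^*\in\Delta_N : r_i(t)x^*_i\ge\lambda_i \text{ for all } i\in\mathcal{P} \text{ and all rounds } t\}$, which is assumed nonempty. The regret of a policy over $T$ rounds is $\mathrm{Regret}_T=\sup_{\bm{x}^*\in\Omega}\sum_{t=1}^T\sum_{i=1}^N r_i(t)\,(x_i^*-x_i(t))$. The \texttt{BanditQ} policy: for each $i\in\mathcal{P}$ maintain $Q_i(0)=0$ and $Q_i(t)=\max\big(0,\,Q_i(t-1)+\lambda_i-r_i(t)x_i(t)\big)$;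 for $i\notin\mathcal{P}$ set $Q_i(t)=0$ for all $t$. Given a non-negative parameter sequence $(V_t)_{t\ge1}$, define surrogate rewards $r'_i(t)=(Q_i(t-1)+V_t)\,r_i(t)$ for all $i\in[N]$. Starting from an arbitrary $\bm{x}(1)\in\Delta_N$, the policy updates by adaptive online gradient ascent: $\bm{x}(t+1)=\Pi_{\Delta_N}\Big(\bm{x}(t)+\bm{r}'(t)\big/\sqrt{2\sum_{\tau=1}^{t}\|\bm{r}'(\tau)\|_2^2}\Big)$, where $\Pi_{\Delta_N}$ denotes Euclidean projection onto $\Delta_N$. *)

From HB Require Import structures.
From mathcomp Require Import all_boot all_order all_algebra.
From mathcomp Require Import reals.
Set Implicit Arguments. Unset Strict Implicit. Unset Printing Implicit Defensive.
Import Order.TTheory GRing.Theory Num.Theory.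
Local Open Scope ring_scope.

Section BanditQ.
Variables (R : realType) (N : nat).

Definition in_simplex (x : 'I_N -> R) : Prop :=
  (forall i, 0 <= x i) /\ \sum_i x i = 1.

Definition sqnorm (v : 'I_N -> R) : R := \sum_i (v i) ^+ 2.

Definition is_simplex_proj (y p : 'I_N -> R) : Prop :=
  in_simplex p /\
  forall z, in_simplex z -> sqnorm (fun i => y i - p i) <= sqnorm (fun i => y i - z i).

Fixpoint Qlen (P : {set 'I_N}) (lam : 'I_N -> R) (r x : nat -> 'I_N -> R)
    (t : nat) (i : 'I_N) : R :=
  match t with
  | 0 => 0
  | t'.+1 => if i \in P then Num.max 0 (Qlen P lam r x t' i + lam i - r t i * x t i)
             else 0
  end.

Definition surr (P : {set 'I_N}) (lam : 'I_N -> R) (r x : nat -> 'I_N -> R)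
    (V : nat -> R) (t : nat) (i : 'I_N) : R :=
  (Qlen P lam r x t.-1 i + V t) * r t i.

Definition banditQ_run (T : nat) (P : {set 'I_N}) (lam : 'I_N -> R)
    (r x : nat -> 'I_N -> R) (V : nat -> R) : Prop :=
  in_simplex (x 1%N) /\
  forall t : nat, (1 <= t < T)%N ->
    is_simplex_proj
      (fun i => x t i + surr P lam r x V t i /
         Num.sqrt (2 * \sum_(1 <= tau < t.+1) sqnorm (surr P lam r x V tau)))
      (x t.+1).

Definition feasible (T : nat) (P : {set 'I_N}) (lam : 'I_N -> R)
    (r : nat -> 'I_N -> R) (xs : 'I_N -> R) : Prop :=
  in_simplex xs /\
  forall t : nat, (1 <= t <= T)%N -> forall i, i \in P -> lam i <= r t i * xs i.

Definition regret_against (T : nat) (r x : nat -> 'I_N -> R) (xs : 'I_N -> R) : R :=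
  \sum_(1 <= t < T.+1) \sum_i r t i * (xs i - x t i).

End BanditQ.

From HB Require Import structures.
From mathcomp Require Import all_boot all_order all_algebra.
From mathcomp Require Import reals.
From mathcomp Require Import ring lra zify.
Set Implicit Arguments. Unset Strict Implicit. Unset Printing Implicit Defensive.
Import Order.TTheory GRing.Theory Num.Theory.
Local Open Scope ring_scope.

(* BanditQ is adaptive online gradient ascent on the surrogate rewards
   r'(t) = (Q(t-1) + V) r(t), so its surrogate regret against any point of the
   simplex is at most 2 s_T with s_T = sqrt (2 sum_t |r'(t)|^2).  For a feasible
   comparator x*, the Lyapunov function L(t) = sum_i Q_i(t)^2 grows per round by at
   most 2 <Q(t-1) r(t), x* - x(t)> + N = 2 <r'(t) - V r(t), x* - x(t)> + N.
   Summing, L(n) + 2 V Regret_n <= 4 s_n + n N.  Hence 2 V Regret_T <= 4 s_T + N T,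
   and since Regret_n >= -n also L(n) = O(s_T + V T).  This bounds every |r'(t)|^2
   by 2 L(t-1) + 2 N V^2, giving the self-referential s_T^2 <= T (16 s_T + O(V T + V^2));
   with V = Theta(sqrt T) this forces s_T = O(T^(5/4)), so
   Regret_T = O(T^(5/4) / V) = O(T^(3/4)). *)

Section SimplexGeometry.
Variables (R : realType) (N : nat).
Implicit Types (x y z p g v : 'I_N -> R).

Lemma sqnorm_ge0 v : 0 <= sqnorm v.
Proof. by apply: sumr_ge0 => i _; rewrite sqr_ge0. Qed.

Lemma in_simplex_le1 x : in_simplex x -> forall i, 0 <= x i <= 1.
Proof.
move=> [x0 x1] i; rewrite x0 -x1 (bigD1 i) //= lerDl.
by apply: sumr_ge0 => j _; apply: x0.
Qed.

Lemma in_simplex_segment p z l : in_simplex p -> in_simplex z -> 0 <= l <= 1 ->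
  in_simplex (fun i => p i + l * (z i - p i)).
Proof.
move=> [p0 p1] [z0 z1] /andP[l0 l1]; split=> [i|].
  have -> : p i + l * (z i - p i) = (1 - l) * p i + l * z i by ring.
  by rewrite addr_ge0 // mulr_ge0 // subr_ge0.
by rewrite big_split /= -mulr_sumr sumrB p1 z1 subrr mulr0 addr0.
Qed.

Lemma sqnorm_sub_simplex_le2 x z : in_simplex x -> in_simplex z ->
  sqnorm (fun i => x i - z i) <= 2.
Proof.
move=> simp_x simp_z; apply: (@le_trans _ _ (\sum_i (x i + z i))).
  apply: ler_sum => i _.
  have /andP[x0 x1] := in_simplex_le1 simp_x i.
  have /andP[z0 z1] := in_simplex_le1 simp_z i.
  nra.
by rewrite big_split /= simp_x.2 simp_z.2.
Qed.

Lemma simplex_proj_obtuse y p z : is_simplex_proj y p -> in_simplex z ->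
  \sum_i (y i - p i) * (z i - p i) <= 0.
Proof.
move=> [simp_p p_min] simp_z.
set B := \sum_i _; set C := sqnorm (fun i => z i - p i).
have C0 : 0 <= C := sqnorm_ge0 _.
have BC l : 0 < l <= 1 -> 2 * B <= l * C.
  case/andP=> l0 l1; have l01 : 0 <= l <= 1 by rewrite ltW.
  have := p_min _ (in_simplex_segment simp_p simp_z l01).
  have -> : sqnorm (fun i => y i - (p i + l * (z i - p i))) =
      sqnorm (fun i => y i - p i) - l * (2 * B) + l * (l * C).
    rewrite /sqnorm /B /C !mulr_sumr -sumrB -big_split /=.
    by apply: eq_bigr => i _; ring.
  by move=> ?; rewrite -(ler_pM2l l0); lra.
rewrite leNgt; apply/negP => B0.
(* Otherwise a step of size [B / (B + C)] from [p] towards [z] gets closer to [y]. *)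
have /BC : 0 < B / (B + C) <= 1 by rewrite divr_gt0 ?ler_pdivrMr /=; lra.
have : B / (B + C) * C <= B by rewrite mulrAC ler_pdivrMr; nra.
lra.
Qed.

Lemma simplex_proj_contract y p z : is_simplex_proj y p -> in_simplex z ->
  sqnorm (fun i => p i - z i) <= sqnorm (fun i => y i - z i).
Proof.
move=> proj_p simp_z; have := simplex_proj_obtuse proj_p simp_z.
have -> : sqnorm (fun i => y i - z i) = sqnorm (fun i => y i - p i)
    - 2 * \sum_i (y i - p i) * (z i - p i) + sqnorm (fun i => p i - z i).
  by rewrite /sqnorm mulr_sumr -sumrB -big_split /=; apply: eq_bigr => i _; ring.
have := sqnorm_ge0 (fun i => y i - p i); lra.
Qed.

Lemma simplex_gain_geN1 (w : 'I_N -> R) x z :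
  (forall i, 0 <= w i <= 1) -> in_simplex x -> in_simplex z ->
  -1 <= \sum_i w i * (z i - x i).
Proof.
move=> w01 [x0 x1] [z0 _]; rewrite -x1 -sumrN; apply: ler_sum => i _.
have := w01 i; have := x0 i; have := z0 i; nra.
Qed.

(* At [s = 0] the divisions are junk ([_ / 0 = 0]); the hypothesis [g = 0] covers that case. *)
Lemma ogd_step_le x z g s d : 0 <= s -> (s = 0 -> forall i, g i = 0) ->
  d <= sqnorm (fun i => x i + g i / s - z i) ->
  \sum_i g i * (z i - x i) <=
    s / 2 * (sqnorm (fun i => x i - z i) - d) + sqnorm g / (2 * s).
Proof.
move=> s0 g0 hd; have [s_eq0|s_neq0] := eqVneq s 0.
  rewrite big1 => [|i _]; last by rewrite g0 // mul0r.
  by rewrite s_eq0 !mul0r mulr0 invr0 mulr0 addr0.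
have {}s0 : 0 < s by rewrite lt_def s_neq0.
set A := sqnorm _ in hd; set B := \sum_i _; set G := sqnorm g.
have eA : A = sqnorm (fun i => x i - z i) - 2 / s * B + G / s ^+ 2.
  rewrite /A /B /G /sqnorm mulr_sumr mulr_suml -sumrB -big_split /=.
  by apply: eq_bigr => i _; field.
have -> : s / 2 * (sqnorm (fun i => x i - z i) - d) + G / (2 * s) =
    s / 2 * (A - d) + B by rewrite eA; field.
by rewrite lerDr mulr_ge0 ?subr_ge0 // divr_ge0 // ltW.
Qed.

End SimplexGeometry.

Section AdaptiveSums.
Variable R : realType.
Implicit Types (s a D : nat -> R).

Lemma sum_weighted_decrements_le s D d n :
  (forall t, 0 <= s t) -> (forall t, s t <= s t.+1) -> (forall t, 0 <= D t <= d) ->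
  \sum_(1 <= t < n.+1) s t * (D t - D t.+1) <= d * s n - s n * D n.+1.
Proof.
move=> s0 s_incr D0d; elim: n => [|n IH].
  by rewrite big_geq //; have := D0d 1%N; have := s0 0%N; nra.
rewrite big_nat_recr //=.
have := D0d n.+1; have := s_incr n; have := s0 n; nra.
Qed.

Lemma adagrad_sum_le s a n :
  (forall t, 0 <= s t) -> (forall t, 0 <= a t) ->
  (forall t, s t.+1 ^+ 2 = s t ^+ 2 + 2 * a t.+1) ->
  \sum_(1 <= t < n.+1) a t / s t <= s n - s 0%N.
Proof.
move=> s0 a0 s_sqrS; elim: n => [|n IH]; first by rewrite big_geq // subrr.
rewrite big_nat_recr //=.
suff : a n.+1 / s n.+1 <= s n.+1 - s n by lra.
have := s_sqrS n; have := s0 n; have := s0 n.+1; have := a0 n.+1.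
have [->|sn_neq0] := eqVneq (s n.+1) 0; first by rewrite invr0 mulr0; nra.
have sn_gt0 : 0 < s n.+1 by rewrite lt_def sn_neq0 s0.
by rewrite ler_pdivrMr //; nra.
Qed.

End AdaptiveSums.

Definition ogd_scale (R : realType) (N : nat) (g : nat -> 'I_N -> R) (t : nat) : R :=
  Num.sqrt (2 * \sum_(1 <= tau < t.+1) sqnorm (g tau)).

Definition ogd_run (R : realType) (N T : nat) (g x : nat -> 'I_N -> R) : Prop :=
  in_simplex (x 1%N) /\
  forall t : nat, (1 <= t < T)%N ->
    is_simplex_proj (fun i => x t i + g t i / ogd_scale g t) (x t.+1).

Lemma banditQ_run_ogd (R : realType) (N T : nat) (P : {set 'I_N}) (lam : 'I_N -> R)
    (r x : nat -> 'I_N -> R) (V : nat -> R) :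
  banditQ_run T P lam r x V -> ogd_run T (surr P lam r x V) x.
Proof. by []. Qed.

Section AdaptiveOGD.
Variables (R : realType) (N T : nat) (g x : nat -> 'I_N -> R) (z : 'I_N -> R).
Hypothesis run : ogd_run T g x.
Hypothesis simp_z : in_simplex z.

Let s := ogd_scale g.

Lemma ogd_simplex t : (1 <= t <= T)%N -> in_simplex (x t).
Proof.
elim: t => [//|[_ _|t IH /andP[_ tT]]]; first exact: run.1.
by have [] := run.2 t.+1 tT.
Qed.

Lemma ogd_scale_ge0 t : 0 <= s t.
Proof. exact: sqrtr_ge0. Qed.

Lemma ogd_scale_sqr t : s t ^+ 2 = 2 * \sum_(1 <= tau < t.+1) sqnorm (g tau).
Proof. by rewrite sqr_sqrtr // mulr_ge0 // sumr_ge0 // => tau _; apply: sqnorm_ge0. Qed.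

Lemma ogd_scaleS_sqr t : s t.+1 ^+ 2 = s t ^+ 2 + 2 * sqnorm (g t.+1).
Proof. by rewrite !ogd_scale_sqr big_nat_recr //= mulrDr. Qed.

Lemma ogd_scale_incr t : s t <= s t.+1.
Proof.
rewrite -ler_sqr ?nnegrE ?ogd_scale_ge0 // ogd_scaleS_sqr lerDl.
by rewrite mulr_ge0 ?sqnorm_ge0.
Qed.

Lemma ogd_scale_eq0 t : s t.+1 = 0 -> forall i, g t.+1 i = 0.
Proof.
move=> s_eq0 i; have := ogd_scaleS_sqr t; rewrite s_eq0 expr0n /=.
have := sqnorm_ge0 (g t.+1); have := sqr_ge0 (s t).
have : g t.+1 i ^+ 2 <= sqnorm (g t.+1).
  by rewrite /sqnorm (bigD1 i) //= lerDl sumr_ge0 // => j _; rewrite sqr_ge0.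
move=> gi_le g0 s0 gs_eq; apply/eqP; rewrite -sqrf_eq0 eq_le sqr_ge0 andbT.
lra.
Qed.

Lemma ogd_scale_le m n : (m <= n)%N -> s m <= s n.
Proof.
move=> /subnK <-; elim: (n - m)%N => [|k IH]; first by rewrite add0n.
by rewrite addSn (le_trans IH) ?ogd_scale_incr.
Qed.

(* [x (T + 1)] is not constrained by the run, so the distance is truncated after [T]. *)
Let dist t := if (1 <= t <= T)%N then sqnorm (fun i => x t i - z i) else 0.

Lemma ogd_dist_bounded t : 0 <= dist t <= 2.
Proof.
rewrite /dist; case: ifP => [t1T|_]; last by rewrite lexx ler0n.
by rewrite sqnorm_ge0 sqnorm_sub_simplex_le2 //; apply: ogd_simplex.
Qed.

Lemma ogd_round_le t : (1 <= t <= T)%N ->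
  \sum_i g t i * (z i - x t i) <=
    (s t * (dist t - dist t.+1) + sqnorm (g t) / s t) / 2.
Proof.
case: t => [//|t] t1T.
have dist_le : dist t.+2 <= sqnorm (fun i => x t.+1 i + g t.+1 i / s t.+1 - z i).
  rewrite /dist; case: ifP => [t2T|_]; last exact: sqnorm_ge0.
  apply: simplex_proj_contract simp_z; apply: run.2; lia.
apply: le_trans (ogd_step_le (ogd_scale_ge0 _) (@ogd_scale_eq0 t) dist_le) _.
by rewrite /dist t1T invfM; lra.
Qed.

Lemma ogd_regret_le n : (n <= T)%N ->
  \sum_(1 <= t < n.+1) \sum_i g t i * (z i - x t i) <= 2 * s n.
Proof.
move=> nT; apply: le_trans (_ : \sum_(1 <= t < n.+1)
    ((s t * (dist t - dist t.+1) + sqnorm (g t) / s t) / 2) <= _).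
  by apply: ler_sum_nat => t tn; apply: ogd_round_le; move: tn nT; lia.
rewrite -mulr_suml big_split /=.
have := sum_weighted_decrements_le n ogd_scale_ge0 ogd_scale_incr ogd_dist_bounded.
have := adagrad_sum_le n ogd_scale_ge0 (fun t => sqnorm_ge0 (g t)) ogd_scaleS_sqr.
have := ogd_scale_ge0 0; have := ogd_scale_ge0 n; have := ogd_dist_bounded n.+1.
nra.
Qed.

End AdaptiveOGD.

Lemma lindley_sqr_drift (R : realType) (q l u w : R) :
  0 <= q -> 0 <= l <= 1 -> 0 <= u <= 1 -> l <= w ->
  Num.max 0 (q + l - u) ^+ 2 - q ^+ 2 <= 2 * q * (w - u) + 1.
Proof.
move=> q0 /andP[l0 l1] /andP[u0 u1] lw.
have : Num.max 0 (q + l - u) ^+ 2 <= (q + l - u) ^+ 2.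
  by case: (lerP 0 (q + l - u)) => // _; rewrite expr0n sqr_ge0.
nra.
Qed.

Section Queues.
Variables (R : realType) (N : nat) (P : {set 'I_N}) (lam : 'I_N -> R).
Variables (r x : nat -> 'I_N -> R).
Hypothesis lam01 : forall i, i \in P -> 0 <= lam i <= 1.

Local Notation Q := (Qlen P lam r x).

Lemma Qlen_ge0 t i : 0 <= Q t i.
Proof. by case: t => //= t; case: ifP => // _; rewrite le_max lexx. Qed.

Lemma Qlen_notin t i : i \notin P -> Q t i = 0.
Proof. by move=> /negbTE iP; case: t => //= t; rewrite iP. Qed.

Lemma Qlen_sqr_drift t (xs : 'I_N -> R) :
  (forall i, 0 <= r t.+1 i <= 1) -> (forall i, 0 <= x t.+1 i <= 1) ->
  (forall i, i \in P -> lam i <= r t.+1 i * xs i) ->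
  \sum_i Q t.+1 i ^+ 2 - \sum_i Q t i ^+ 2 <=
    2 * \sum_i Q t i * (r t.+1 i * (xs i - x t.+1 i)) + N%:R.
Proof.
move=> r01 x01 feas_t.
have -> : N%:R = \sum_(i : 'I_N) (1 : R) by rewrite sumr_const card_ord.
rewrite mulr_sumr -sumrB -big_split /=.
apply: ler_sum => i _ /=; case: ifP => [iP|/negbT iP].
  have /andP[r0 r1] := r01 i; have /andP[x0 x1] := x01 i.
  apply: le_trans (lindley_sqr_drift (Qlen_ge0 t i) (lam01 iP) _ (feas_t i iP)) _.
    by rewrite mulr_ge0 //= mulr_ile1.
  lra.
by rewrite Qlen_notin // expr0n /= subrr mul0r mulr0 add0r ler01.
Qed.

End Queues.

Section BanditQ.
Variables (R : realType) (N T : nat) (V : R) (P : {set 'I_N}) (lam : 'I_N -> R).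
Variables (r x : nat -> 'I_N -> R) (xs : 'I_N -> R).
Hypothesis V0 : 0 <= V.
Hypothesis lam01 : forall i, i \in P -> 0 <= lam i <= 1.
Hypothesis r01 : forall t i, (1 <= t <= T)%N -> 0 <= r t i <= 1.
Hypothesis run : banditQ_run T P lam r x (fun _ => V).
Hypothesis feas : feasible T P lam r xs.

Let g := surr P lam r x (fun _ => V).
Let s := ogd_scale g.
Let ogd := banditQ_run_ogd run.
Let L t := \sum_i Qlen P lam r x t i ^+ 2.

Lemma banditQ_action01 t i : (1 <= t <= T)%N -> 0 <= x t i <= 1.
Proof. by move=> tT; apply: in_simplex_le1; exact: (ogd_simplex ogd tT). Qed.

Lemma potential_regret_le n : (n <= T)%N ->
  L n + 2 * V * regret_against n r x xs <=
    2 * \sum_(1 <= t < n.+1) \sum_i g t i * (xs i - x t i) + n%:R * N%:R.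
Proof.
elim: n => [_|n IH nT].
  rewrite /L /regret_against !big_geq // big1 => [|i _]; last by rewrite expr0n.
  lra.
have n1T : (1 <= n.+1 <= T)%N by lia.
rewrite /regret_against !(big_nat_recr n.+1) //= -/(regret_against n r x xs) -natr1.
have -> : \sum_i g n.+1 i * (xs i - x n.+1 i) =
    \sum_i Qlen P lam r x n i * (r n.+1 i * (xs i - x n.+1 i))
    + V * \sum_i r n.+1 i * (xs i - x n.+1 i).
  by rewrite mulr_sumr -big_split; apply: eq_bigr => i _; rewrite /g /surr /=; ring.
have := Qlen_sqr_drift lam01 (fun i => r01 i n1T) (fun i => banditQ_action01 i n1T)
  (fun i => feas.2 _ n1T i).
rewrite -/(L n) -/(L n.+1); have := IH (ltnW nT); lra.
Qed.

Lemma potential_regret_scale_le n : (n <= T)%N ->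
  L n + 2 * V * regret_against n r x xs <= 4 * s n + n%:R * N%:R.
Proof.
move=> nT; have := ogd_regret_le ogd feas.1 nT; have := potential_regret_le nT.
rewrite -/s; lra.
Qed.

Lemma regret_geN n : (n <= T)%N -> - n%:R <= regret_against n r x xs.
Proof.
move=> nT; apply: le_trans (_ : \sum_(1 <= t < n.+1) (-1) <= _).
  by rewrite sumr_const_nat subn1 /= mulNrn.
apply: ler_sum_nat => t tn; have tT : (1 <= t <= T)%N by lia.
exact: simplex_gain_geN1 (fun i => r01 i tT) (ogd_simplex ogd tT) feas.1.
Qed.

Lemma potential_le n : (n <= T)%N -> L n <= 4 * s T + (2 * V + N%:R) * T%:R.
Proof.
move=> nT; have := potential_regret_scale_le nT; have := ogd_scale_le g nT; rewrite -/s.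
have nT' : n%:R <= T%:R :> R by rewrite ler_nat.
have : 0 <= V * (regret_against n r x xs + n%:R).
  by apply: mulr_ge0 => //; have := regret_geN nT; lra.
have : 0 <= (2 * V + N%:R) * (T%:R - n%:R) by rewrite mulr_ge0 ?subr_ge0 // addr_ge0 ?mulr_ge0.
lra.
Qed.

Lemma surr_sqnorm_le t : (1 <= t <= T)%N ->
  sqnorm (g t) <= 2 * L t.-1 + 2 * N%:R * V ^+ 2.
Proof.
have -> : N%:R = \sum_(i : 'I_N) (1 : R) by rewrite sumr_const card_ord.
move=> tT; rewrite /L !mulr_sumr mulr_suml.
rewrite -big_split; apply: ler_sum => i _ /=; rewrite /g /surr.
have := r01 i tT; have := Qlen_ge0 P lam r x t.-1 i.
set q := Qlen _ _ _ _ _ _ => q0 /andP[r0 r1].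
have : ((q + V) * r t i) ^+ 2 <= (q + V) ^+ 2.
  by rewrite exprMn ler_piMr ?sqr_ge0 ?exprn_ile1.
have := sqr_ge0 (q - V); nra.
Qed.

Lemma scale_sqr_le :
  s T ^+ 2 <= T%:R * (16 * s T + 4 * (2 * V + N%:R) * T%:R + 4 * N%:R * V ^+ 2).
Proof.
rewrite ogd_scale_sqr; apply: le_trans (_ : 2 * \sum_(1 <= t < T.+1)
    (2 * (4 * s T + (2 * V + N%:R) * T%:R) + 2 * N%:R * V ^+ 2) <= _).
  rewrite ler_pM2l //; apply: ler_sum_nat => t tT.
  have := surr_sqnorm_le tT; have := potential_le (leq_trans (leq_pred t) (proj2 (andP tT))).
  lra.
rewrite sumr_const_nat subn1 /= -mulr_natl; lra.
Qed.

Lemma regret_scale_le : 2 * V * regret_against T r x xs <= 4 * s T + N%:R * T%:R.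
Proof.
have := potential_regret_scale_le (leqnn T).
have : 0 <= L T by apply: sumr_ge0 => i _; apply: sqr_ge0.
lra.
Qed.

End BanditQ.

Section Growth.
Variable R : realType.

Lemma sqr_le_affine_bound (S b c : R) :
  0 <= b -> 0 <= c -> S ^+ 2 <= b * S + c -> S <= b + Num.sqrt c.
Proof.
move=> b0 c0 hS; rewrite leNgt; apply/negP => hlt.
have := sqrtr_ge0 c; have := sqr_sqrtr c0; nra.
Qed.

Lemma scale_growth (c2 n tau V S : R) :
  1 <= tau -> 0 <= n -> 0 <= V <= c2 * tau ^+ 2 ->
  S ^+ 2 <= tau ^+ 4 * (16 * S + 4 * (2 * V + n) * tau ^+ 4 + 4 * n * V ^+ 2) ->
  S <= (16 + Num.sqrt (8 * c2 + 4 * n + 4 * n * c2 ^+ 2)) * tau ^+ 5.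
Proof.
move=> tau1 n0 /andP[V0 Vc2] hS.
have tau_pow_ge0 k : 0 <= tau ^+ k by rewrite exprn_ge0 // (le_trans ler01).
set K := 8 * c2 + 4 * n + 4 * n * c2 ^+ 2.
have c2_ge0 : 0 <= c2 by have := exprn_ege1 2 tau1; nra.
have K_ge0 : 0 <= K by rewrite /K; have := sqr_ge0 c2; nra.
have V2_le : V ^+ 2 <= c2 ^+ 2 * tau ^+ 4.
  have -> : c2 ^+ 2 * tau ^+ 4 = (c2 * tau ^+ 2) ^+ 2 by rewrite exprMn -exprM.
  by rewrite ler_sqr ?nnegrE //; lra.
have [t8 t10] : tau ^+ 8 = tau ^+ 4 * tau ^+ 4 /\ tau ^+ 10 = tau ^+ 2 * tau ^+ 8.
  by rewrite -!exprD.
have c_le : 4 * (2 * V + n) * tau ^+ 8 + 4 * n * V ^+ 2 * tau ^+ 4 <= K * tau ^+ 10.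
  have t8_le : tau ^+ 8 <= tau ^+ 10 by rewrite ler_weXn2l.
  have : V * tau ^+ 8 <= c2 * tau ^+ 10.
    by rewrite t10 mulrA; apply: ler_wpM2r.
  have : n * V ^+ 2 * tau ^+ 4 <= n * c2 ^+ 2 * tau ^+ 8.
    by rewrite t8; have := mulr_ge0 n0 (tau_pow_ge0 4); nra.
  have : 0 <= n * (1 + c2 ^+ 2) * (tau ^+ 10 - tau ^+ 8).
    by rewrite !mulr_ge0 ?subr_ge0 ?addr_ge0 ?sqr_ge0.
  rewrite /K; nra.
have sqrt_c : Num.sqrt (K * tau ^+ 10) = Num.sqrt K * tau ^+ 5.
  by rewrite sqrtrM // (exprM tau 5 2) sqrtr_sqr ger0_norm.
set c := 4 * (2 * V + n) * tau ^+ 8 + 4 * n * V ^+ 2 * tau ^+ 4 in c_le.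
have c_ge0 : 0 <= c.
  have := mulr_ge0 (mulr_ge0 n0 (sqr_ge0 V)) (tau_pow_ge0 4).
  have := mulr_ge0 (addr_ge0 (mulr_ge0 (ler0n R 2) V0) n0) (tau_pow_ge0 8).
  rewrite /c; lra.
apply: le_trans (sqr_le_affine_bound (b := 16 * tau ^+ 4) _ c_ge0 _) _.
- by rewrite mulr_ge0.
- by rewrite /c t8; lra.
have : tau ^+ 4 <= tau ^+ 5 by apply: ler_weXn2l.
have : Num.sqrt c <= Num.sqrt K * tau ^+ 5 by rewrite -sqrt_c ler_sqrt // mulr_ge0.
lra.
Qed.

Lemma regret_growth (c1 n tau V S M reg : R) :
  0 < c1 -> 1 <= tau -> c1 * tau ^+ 2 <= V -> 0 <= n -> 0 <= M ->
  S <= M * tau ^+ 5 -> 2 * V * reg <= 4 * S + n * tau ^+ 4 ->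
  reg <= (4 * M + n) / (2 * c1) * tau ^+ 3.
Proof.
move=> c1_gt0 tau1 c1V n0 M0 SM hreg.
have tau_pow_gt0 k : 0 < tau ^+ k by rewrite exprn_gt0 // (lt_le_trans ltr01).
have [reg_le0|reg_gt0] := lerP reg 0.
  apply: le_trans reg_le0 _; apply: mulr_ge0; last exact: ltW.
  by apply: divr_ge0; lra.
rewrite mulrAC ler_pdivlMr ?mulr_gt0 // -(ler_pM2l (tau_pow_gt0 2)).
have : tau ^+ 4 <= tau ^+ 5 by apply: ler_weXn2l.
have : c1 * tau ^+ 2 * reg <= V * reg by rewrite ler_wpM2r // ltW.
have -> : tau ^+ 2 * ((4 * M + n) * tau ^+ 3) = (4 * M + n) * tau ^+ 5.
  by rewrite mulrCA -exprD.
have := tau_pow_gt0 4; nra.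
Qed.

End Growth.

Theorem proposition3 (R : realType) (N : nat) (c1 c2 : R) :
  0 < c1 -> c1 <= c2 ->
  exists C : R, forall (T : nat) (V : R),
    (1 <= T)%N ->
    c1 * Num.sqrt T%:R <= V -> V <= c2 * Num.sqrt T%:R ->
    forall (P : {set 'I_N}) (lam : 'I_N -> R) (r x : nat -> 'I_N -> R),
      (forall i, i \in P -> 0 <= lam i <= 1) ->
      (forall i, i \notin P -> lam i = 0) ->
      \sum_(i in P) lam i <= 1 ->
      (forall t i, (1 <= t <= T)%N -> 0 <= r t i <= 1) ->
      banditQ_run T P lam r x (fun _ => V) ->
      forall xs : 'I_N -> R, feasible T P lam r xs ->
        regret_against T r x xs <=
          C * (Num.sqrt T%:R * Num.sqrt (Num.sqrt T%:R)).
Proof.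
move=> c1_gt0 _.
set M := 16 + Num.sqrt (8 * c2 + 4 * N%:R + 4 * N%:R * c2 ^+ 2).
exists ((4 * M + N%:R) / (2 * c1)).
move=> T V T_ge1 c1V Vc2 P lam r x lam01 _ _ r01 run xs feas.
set tau := Num.sqrt (Num.sqrt T%:R).
have sqrtT : Num.sqrt T%:R = tau ^+ 2 by rewrite sqr_sqrtr // sqrtr_ge0.
have T_eq : T%:R = tau ^+ 4 by rewrite (exprM tau 2 2) -sqrtT sqr_sqrtr // ler0n.
have tau_ge1 : 1 <= tau.
  by rewrite -{1}sqrtr1 ler_sqrt ?sqrtr_ge0 // -{1}sqrtr1 ler_sqrt // ler1n.
rewrite sqrtT in c1V Vc2 *; rewrite -exprSr.
have V0 : 0 <= V.
  apply: le_trans c1V; apply: mulr_ge0; first exact: ltW.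
  exact: exprn_ge0 (le_trans ler01 tau_ge1).
have := scale_sqr_le V0 lam01 r01 run feas; have := regret_scale_le V0 lam01 r01 run feas.
rewrite T_eq => regret_le scale_le.
apply: (regret_growth c1_gt0 tau_ge1 c1V (ler0n _ _) _ _ regret_le).
  by rewrite addr_ge0 ?sqrtr_ge0.
by apply: scale_growth tau_ge1 (ler0n _ _) _ scale_le; rewrite V0.
Qed.
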